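(* Consider the two-good panel bundle model with nonseparable utility described in the context, and suppose the complementarity, exclusion, stationarity and monotonicity assumptions stated there hold. Then for any $(x_s,x_t)$ and $s\ne t\le T$: (1) for each $j\in\mathcal C$: if $P_s(\{j\}\mid x_s,x_t)>P_t(\{j\}\mid x_s,x_t)$, then $(-1)^{\mathbb 1[j\in D_A]}\Delta_{s,t}\delta_A<0$ or $(-1)^{\mathbb 1[j\in D_B]}\Delta_{s,t}\delta_B<0$; (2) for each $\ell\in\{A,B\}$ with $\ell_{-1}$ the other good: if $P_s(D_\ell\mid x_s,x_t)>P_t(D_\ell\mid x_s,x_t)$, then $\Delta_{s,t}\delta_\ell>0$ or $\operatorname{sign}(\Gamma_0)\,\Delta_{s,t}\delta_{\ell_{-1}}>0$.
   Context: Panel model with two goods $A,B$, consumers $i$, periods $t=1,\dots,T$, $T\ge2$; choice set $\mathcal C=\{A,B,AB,O\}$ ($A$ = only $A$, $B$ = only $B$, $AB$ = both, $O$ = outside option). Utilities: $u_{ijt}=u(X_{ijt}'\beta_0,\alpha_{ij},\epsilon_{ijt})$ for $j\in\{A,B\}$, where $u$ is a possibly unknown, possibly nonseparable function, $X_{ijt}$ observed covariates, $\alpha_{ij}$ unobserved time-invariant fixed effects, $\epsilon_{ijt}$ unobserved shocks; $u_{iOt}=0$; $u_{iABt}=u_{iAt}+u_{iBt}+\Gamma_{it}$. $Y_{it}$ is the utility-maximizing choice; ties have probability zero. $X_{it}=(X_{iAt},X_{iBt})$, $\alpha_i=(\alpha_{iA},\alpha_{iB})$, $\epsilon_{it}=(\epsilon_{iAt},\epsilon_{iBt})$.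 Complementarity assumption: $\Gamma_{it}=\Gamma(Z_i)$ for an observed time-invariant $Z_i$; $Z_i$ is suppressed and $\Gamma_0$ denotes $\Gamma(Z_i)$. Exclusion: some component of $X_{it}$ not in $Z_i$ has nonzero coefficient. Stationarity: for all $s,t\le T$, $\epsilon_{is}\mid(X_{is},X_{it},Z_i,\alpha_i)\overset{d}{=}\epsilon_{it}\mid(X_{is},X_{it},Z_i,\alpha_i)$. Monotonicity: for every $(\alpha,\epsilon)$, $u(\tilde\delta,\alpha,\epsilon)\ge u(\delta,\alpha,\epsilon)$ whenever $\tilde\delta\ge\delta$. Notation: $P_t(K\mid x_s,x_t)=\Pr(Y_{it}\in K\mid X_{is}=x_s,X_{it}=x_t)$; $D_\ell=\{\ell,AB\}$; $\delta_{\ell t}=x_{\ell t}'\beta_0$; $\Delta_{s,t}\delta_\ell=\delta_{\ell s}-\delta_{\ell t}$; $\operatorname{sign}(x)=\mathbb 1\{x>0\}-\mathbb 1\{x<0\}$. *)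

From HB Require Import structures.
From mathcomp Require Import all_boot all_order all_algebra.
From mathcomp Require Import all_classical all_reals all_analysis.
Set Implicit Arguments. Unset Strict Implicit. Unset Printing Implicit Defensive.
Import Order.TTheory GRing.Theory Num.Theory.
Local Open Scope ring_scope.

Inductive good := gA | gB.
Definition other (l : good) : good := match l with gA => gB | gB => gA end.

Inductive alt := cA | cB | cAB | cO.

(* Membership in D_l = {l, AB}, as a boolean (so that 1[j \in D_l] is its nat value). *)
Definition inD (l : good) (c : alt) : bool :=
  match l, c with
  | gA, cA | gA, cAB | gB, cB | gB, cAB => true
  | _, _ => false
  end.

Definition Dset (l : good) : set alt := [set c | inD l c].

Definition util {R : numDomainType} (uA uB G : R) (c : alt) : R :=
  match c with
  | cA => uA
  | cB => uB
  | cAB => uA + uB + G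
  | cO => 0
  end.

Definition lin_index {R : numDomainType} {k : nat} (x b : 'rV[R]_k) : R :=
  \sum_(i < k) x 0 i * b 0 i.

(** For a set [K] of alternatives, call [K] strictly optimal when some alternative
   of [K] beats every alternative outside [K].  Since ties are null, [Y_s \in K]
   coincides almost surely with strict optimality of [K] at period [s], an event
   determined by the latent [(alpha, eps_s)] and the indices [delta_s].  If the
   conclusion failed, the index change from [s] to [t] would move the utilities
   (through the monotonicity of [u], and for the bundle sets [D_l] through the sign
   of the complementarity [Gamma]) in a direction preserving strict optimality
   of [K]; by stationarity the event then has the same probability at [t], where
   it forces [Y_t \in K].  So [P_s(K) <= P_t(K)], contradicting the hypothesis. *)
From HB Require Import structures.
From mathcomp Require Import all_boot all_order all_algebra.
From mathcomp Require Import all_classical all_reals all_analysis.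
From mathcomp Require Import measurable_realfun lra.
Import Order.TTheory GRing.Theory Num.Theory.
Local Open Scope classical_set_scope.
Local Open Scope ring_scope.

Section measurable_alt.
Context {d} {X : measurableType d}.

Lemma measurable_exists_alt (Q : alt -> set X) :
  (forall c, measurable (Q c)) -> measurable [set x | exists c, Q c x].
Proof.
move=> mQ; have -> : [set x | exists c, Q c x] = Q cA `|` Q cB `|` Q cAB `|` Q cO.
  apply/seteqP; split => x /=.
    by move=> [[]] h; [left; left; left | left; left; right | left; right | right].
  by move=> [[[h|h]|h]|h]; eexists; exact: h.
by repeat apply: measurableU.
Qed.

Lemma measurable_forall_alt (Q : alt -> set X) :
  (forall c, measurable (Q c)) -> measurable [set x | forall c, Q c x].
Proof.
move=> mQ; have -> : [set x | forall c, Q c x] = Q cA `&` Q cB `&` Q cAB `&` Q cO.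
  apply/seteqP; split => x /=; first by move=> h; do !split; apply: h.
  by move=> [[[h1 h2] h3] h4] [].
by repeat apply: measurableI.
Qed.

Lemma measurable_const_and (C : Prop) (Q : set X) :
  (C -> measurable Q) -> measurable [set x | C /\ Q x].
Proof.
case: (pselect C) => hC mQ.
  by rewrite (_ : [set x | C /\ Q x] = Q); [exact: mQ | apply/seteqP; split=> x /=; tauto].
by rewrite (_ : [set x | C /\ Q x] = set0); [exact: measurable0 | apply/seteqP; split=> x /=; tauto].
Qed.

Lemma measurable_const_imply (C : Prop) (Q : set X) :
  (C -> measurable Q) -> measurable [set x | C -> Q x].
Proof.
case: (pselect C) => hC mQ.
  by rewrite (_ : [set x | C -> Q x] = Q); [exact: mQ | apply/seteqP; split=> x /=; tauto].
by rewrite (_ : [set x | C -> Q x] = setT); [exact: measurableT | apply/seteqP; split=> x /=; tauto].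
Qed.

Variable R : realType.
Implicit Types f g : X -> R.

Lemma measurable_ltr f g :
  measurable_fun setT f -> measurable_fun setT g -> measurable [set x | f x < g x].
Proof.
move=> mf mg; have := @measurable_fun_ltr _ _ _ _ _ _ mf mg measurableT [set true] I.
by rewrite setTI.
Qed.

Lemma measurable_eqr f g :
  measurable_fun setT f -> measurable_fun setT g -> measurable [set x | f x = g x].
Proof.
move=> mf mg; have := @measurable_fun_eqr _ _ _ _ _ _ mf mg measurableT [set true] I.
by rewrite setTI; congr measurable; apply/seteqP; split => x /= /eqP.
Qed.

End measurable_alt.

Definition strictly_optimal {R : numDomainType} (K : set alt) (f : alt -> R) : Prop :=
  exists2 c, K c & forall c', ~ K c' -> f c' < f c.

Section choice.
Variables (R : numDomainType) (f : alt -> R) (y : alt) (K : set alt).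
Hypothesis y_max : forall c, f c <= f y.

Lemma mem_of_strictly_optimal : strictly_optimal K f -> K y.
Proof.
move=> [c Kc hc]; apply: contrapT => nKy.
by have := lt_le_trans (hc _ nKy) (y_max c); rewrite ltxx.
Qed.

Lemma strictly_optimal_of_mem :
  (forall c, c <> y -> f c <> f y) -> K y -> strictly_optimal K f.
Proof.
move=> no_tie Ky; exists y => // c nKc; rewrite lt_neqAle y_max andbT.
by apply/eqP; apply: no_tie => ecy; apply: nKc; rewrite ecy.
Qed.

End choice.

Lemma measurable_strictly_optimal (R : realType) d (X : measurableType d)
    (V : X -> alt -> R) (K : set alt) :
  (forall c, measurable_fun setT (V ^~ c)) ->
  measurable [set p | strictly_optimal K (V p)].
Proof.
move=> mV; rewrite (_ : [set p | _] = [set p | exists c, K c /\ forall c', ~ K c' -> V p c' < V p c]).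
  apply: measurable_exists_alt => c; apply: measurable_const_and => _.
  apply: measurable_forall_alt => c'; apply: measurable_const_imply => _.
  exact: measurable_ltr.
by apply/seteqP; split => p /= [c]; [move=> Kc hc | move=> [Kc hc]]; exists c.
Qed.

Lemma measurable_tie (R : realType) d (X : measurableType d)
    (g : X -> alt -> R) (Y : X -> alt) :
  (forall c, measurable_fun setT (g ^~ c)) -> (forall K, measurable (Y @^-1` K)) ->
  measurable [set w | exists c, c <> Y w /\ g w c = g w (Y w)].
Proof.
move=> mg mY.
pose E c c' := Y @^-1` [set c'] `&` [set w | c <> c' /\ g w c = g w c'].
rewrite (_ : [set w | _] = [set w | exists c c', E c c' w]).
  apply: (measurable_exists_alt (fun c => [set w | exists c', E c c' w])) => c.
  apply: (measurable_exists_alt (E c)) => c'; apply: measurableI; first exact: mY.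
  by apply: measurable_const_and => _; apply: measurable_eqr.
apply/seteqP; split => w /= [c].
  by move=> h; exists c, (Y w).
by move=> [c' [<- h]]; exists c.
Qed.

Lemma choice_prob_le (R : realType) d (L : measurableType d)
    dO (Omega : measurableType dO) (P : probability Omega R)
    (om_s om_t : Omega -> L) (V_s V_t : L -> alt -> R) (Y_s Y_t : Omega -> alt)
    (K : set alt) :
  measurable_fun setT om_s -> measurable_fun setT om_t ->
  (forall c, measurable_fun setT (V_s ^~ c)) ->
  (forall K', measurable (Y_s @^-1` K')) -> (forall K', measurable (Y_t @^-1` K')) ->
  (forall S, measurable S -> P (om_s @^-1` S) = P (om_t @^-1` S)) ->
  (forall w c, V_s (om_s w) c <= V_s (om_s w) (Y_s w)) ->
  (forall w c, V_t (om_t w) c <= V_t (om_t w) (Y_t w)) ->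
  P [set w | exists c, c <> Y_s w /\ V_s (om_s w) c = V_s (om_s w) (Y_s w)] = 0%E ->
  (forall p, strictly_optimal K (V_s p) -> strictly_optimal K (V_t p)) ->
  (P (Y_s @^-1` K) <= P (Y_t @^-1` K))%E.
Proof.
move=> m_s m_t mV mY_s mY_t law_eq max_s max_t tie0 mono.
set Tie := [set w | _] in tie0.
pose S := [set p | strictly_optimal K (V_s p)].
have mS : measurable S by exact: measurable_strictly_optimal.
have mpre (om : Omega -> L) : measurable_fun setT om -> measurable (om @^-1` S).
  by move=> mom; rewrite -[_ @^-1` _]setTI; apply: mom.
have mTie : measurable Tie.
  by apply: measurable_tie => // c; exact: measurableT_comp (mV c) m_s.
have sub_s : Y_s @^-1` K `<=` om_s @^-1` S `|` Tie.
  move=> w Kw; case: (pselect (Tie w)) => [|no_tie]; [by right | left].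
  apply: strictly_optimal_of_mem => // c ncy eq_cy.
  by apply: no_tie; exists c.
have sub_t : om_t @^-1` S `<=` Y_t @^-1` K.
  by move=> w /mono; apply: mem_of_strictly_optimal.
have mS_s := mpre _ m_s.
apply: (@le_trans _ _ (P (om_s @^-1` S `|` Tie))).
  by apply: le_measure => //; rewrite inE; [exact: mY_s | exact: measurableU].
have -> : P (om_s @^-1` S `|` Tie) = P (om_s @^-1` S) by exact: measureU0.
rewrite law_eq //.
by apply: le_measure => //; rewrite inE; [exact: mpre | exact: mY_t].
Qed.

Section bundle_utility.
Variable R : realFieldType.
Implicit Types (a b G : R) (f g : alt -> R).

Lemma strictly_optimal1_mono (j : alt) f g :
  (forall c, c <> j -> f j - f c <= g j - g c) ->
  strictly_optimal [set j] f -> strictly_optimal [set j] g.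
Proof.
move=> le_gap [_ -> hf]; exists j => // c ncj.
by rewrite -subr_gt0 (lt_le_trans _ (le_gap c ncj)) // subr_gt0; exact: hf.
Qed.

Lemma strictly_optimal1_util_mono (j : alt) a1 b1 a2 b2 G :
  (if inD gA j then a1 <= a2 else a2 <= a1) ->
  (if inD gB j then b1 <= b2 else b2 <= b1) ->
  strictly_optimal [set j] (util a1 b1 G) -> strictly_optimal [set j] (util a2 b2 G).
Proof.
move=> ha hb; apply: strictly_optimal1_mono => c ncj.
by case: j ncj ha hb; case: c => //= *; lra.
Qed.

Definition util_good (l : good) a b : R := if l is gA then a else b.

Lemma strictly_optimal_DsetP (l : good) a b G :
  let x := util_good l a b in let y := util_good (other l) a b in
  strictly_optimal (Dset l) (util a b G) <->
  (y < x /\ 0 < x) \/ (0 < x + G /\ 0 < x + y + G).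
Proof.
case: l => /=; split.
- move=> [[]//= _ h]; move: (h cB notF) (h cO notF) => /= hB hO.
    by left; split.
  by right; split; lra.
- move=> [[hB hO] | [hG hO]]; [exists cA | exists cAB] => //;
    case=> /= nD; first [lra | by case: (nD isT)].
- move=> [[]//= _ h]; move: (h cA notF) (h cO notF) => /= hA hO.
    by left; split.
  by right; split; lra.
- move=> [[hA hO] | [hG hO]]; [exists cB | exists cAB] => //;
    case=> /= nD; first [lra | by case: (nD isT)].
Qed.

Lemma strictly_optimal_Dset_mono (l : good) a1 b1 a2 b2 G :
  util_good l a1 b1 <= util_good l a2 b2 ->
  (0 < G -> util_good (other l) a1 b1 <= util_good (other l) a2 b2) ->
  (G < 0 -> util_good (other l) a2 b2 <= util_good (other l) a1 b1) ->
  strictly_optimal (Dset l) (util a1 b1 G) -> strictly_optimal (Dset l) (util a2 b2 G).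
Proof.
move=> le_own le_pos le_neg; rewrite !strictly_optimal_DsetP /=.
have [lt_yx | le_xy] := ltP (util_good (other l) a2 b2) (util_good l a2 b2);
have [/[dup] hG /le_neg le_oth | /[dup] hG /le_pos le_oth | ->] := ltgtP G 0;
  case=> -[h1 h2]; first [by left; split; lra | by right; split; lra].
Qed.

End bundle_utility.

Definition latent_util {R : numDomainType} {Ta Te : Type} (u : R -> Ta -> Te -> R)
    (G dA dB : R) (p : (Ta * Ta) * (Te * Te)) : alt -> R :=
  util (u dA p.1.1 p.2.1) (u dB p.1.2 p.2.2) G.

Lemma measurable_latent_util (R : realType) da (Ta : measurableType da)
    de (Te : measurableType de) (u : R -> Ta -> Te -> R) G dA dB c :
  (forall d, measurable_fun setT (fun p : Ta * Te => u d p.1 p.2)) ->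
  measurable_fun setT (latent_util u G dA dB ^~ c).
Proof.
move=> mu.
have mA : measurable_fun setT (fun p : (Ta * Ta) * (Te * Te) => u dA p.1.1 p.2.1).
  apply: (measurableT_comp (mu dA) (g := fun p => (p.1.1, p.2.1))).
  by apply: measurable_fun_pair; apply: measurableT_comp.
have mB : measurable_fun setT (fun p : (Ta * Ta) * (Te * Te) => u dB p.1.2 p.2.2).
  apply: (measurableT_comp (mu dB) (g := fun p => (p.1.2, p.2.2))).
  by apply: measurable_fun_pair; apply: measurableT_comp.
rewrite /latent_util; case: c => //=.
by apply: measurable_funD => //; exact: measurable_funD.
Qed.

Section monotone_utility.
Context {R : realFieldType} {Ta Te : Type} {u : R -> Ta -> Te -> R}.
Hypothesis u_mono : forall a e d1 d2, d1 <= d2 -> u d1 a e <= u d2 a e.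

Lemma util_mono_of_signed (b : bool) d1 d2 :
  ~ ((-1) ^+ b * (d1 - d2) < 0) ->
  forall a e, if b then u d1 a e <= u d2 a e else u d2 a e <= u d1 a e.
Proof.
by case: b; rewrite /= ?expr1 ?expr0 ?mulN1r ?mul1r => /negP; rewrite -leNgt => h a e;
  apply: u_mono; lra.
Qed.

Lemma util_mono_of_not_gt d1 d2 : ~ (0 < d1 - d2) -> forall a e, u d1 a e <= u d2 a e.
Proof. by move=> /negP; rewrite -leNgt => h a e; apply: u_mono; lra. Qed.

Lemma util_mono_of_sg G d1 d2 :
  ~ (0 < Num.sg G * (d1 - d2)) ->
  (0 < G -> forall a e, u d1 a e <= u d2 a e) /\
  (G < 0 -> forall a e, u d2 a e <= u d1 a e).
Proof.
move=> /negP; rewrite -leNgt => h; split => hG a e; apply: u_mono.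
- by move: h; rewrite gtr0_sg // mul1r => h; lra.
- by move: h; rewrite ltr0_sg // mulN1r => h; lra.
Qed.

End monotone_utility.

Theorem proposition6
  (R : realType) (k : nat) (beta0 : 'rV[R]_k)
  (Tz : Type) (Gam : Tz -> R) (z : Tz)
  (da : measure_display) (Ta : measurableType da)
  (de : measure_display) (Te : measurableType de)
  (u : R -> Ta -> Te -> R)
  (T s t : nat) (x : nat -> good -> 'rV[R]_k)
  (dO : measure_display) (Omega : measurableType dO) (P : probability Omega R)
  (alA alB : Omega -> Ta) (epsA epsB : nat -> Omega -> Te)
  (Y : nat -> Omega -> alt) :
  (2 <= T)%N -> (1 <= s <= T)%N -> (1 <= t <= T)%N -> s != t ->
  (* exclusion *)
  (exists c : 'I_k, beta0 0 c != 0) ->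
  (* monotonicity *)
  (forall a e d1 d2, d1 <= d2 -> u d1 a e <= u d2 a e) ->
  (* regularity (measurability) *)
  (forall d, measurable_fun [set: Ta * Te] (fun p => u d p.1 p.2)) ->
  measurable_fun [set: Omega] alA -> measurable_fun [set: Omega] alB ->
  (forall tau, measurable_fun [set: Omega] (epsA tau)) ->
  (forall tau, measurable_fun [set: Omega] (epsB tau)) ->
  (forall tau (K : set alt), tau = s \/ tau = t -> measurable (Y tau @^-1` K)) ->
  (* stationarity: (alpha, eps_s) and (alpha, eps_t) have the same conditional law *)
  (forall S : set ((Ta * Ta) * (Te * Te)), measurable S ->
     P ((fun w => ((alA w, alB w), (epsA s w, epsB s w))) @^-1` S) =
     P ((fun w => ((alA w, alB w), (epsA t w, epsB t w))) @^-1` S)) ->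
  (* Y_tau is a utility-maximizing choice *)
  (forall tau, tau = s \/ tau = t -> forall w c,
     util (u (lin_index (x tau gA) beta0) (alA w) (epsA tau w))
          (u (lin_index (x tau gB) beta0) (alB w) (epsB tau w)) (Gam z) c
     <= util (u (lin_index (x tau gA) beta0) (alA w) (epsA tau w))
             (u (lin_index (x tau gB) beta0) (alB w) (epsB tau w)) (Gam z) (Y tau w)) ->
  (* ties have probability zero *)
  (forall tau, tau = s \/ tau = t ->
     P [set w | exists c, c <> Y tau w /\
        util (u (lin_index (x tau gA) beta0) (alA w) (epsA tau w))
             (u (lin_index (x tau gB) beta0) (alB w) (epsB tau w)) (Gam z) c
        = util (u (lin_index (x tau gA) beta0) (alA w) (epsA tau w))
               (u (lin_index (x tau gB) beta0) (alB w) (epsB tau w)) (Gam z) (Y tau w)]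
     = 0%E) ->
  (* (1) *)
  (forall j : alt,
     (P (Y t @^-1` [set j]) < P (Y s @^-1` [set j]))%E ->
     (-1) ^+ inD gA j * (lin_index (x s gA) beta0 - lin_index (x t gA) beta0) < 0
     \/ (-1) ^+ inD gB j * (lin_index (x s gB) beta0 - lin_index (x t gB) beta0) < 0)
  /\
  (* (2) *)
  (forall l : good,
     (P (Y t @^-1` Dset l) < P (Y s @^-1` Dset l))%E ->
     0 < lin_index (x s l) beta0 - lin_index (x t l) beta0
     \/ 0 < Num.sg (Gam z) *
            (lin_index (x s (other l)) beta0 - lin_index (x t (other l)) beta0)).
Proof.
move=> _ _ _ _ _ u_mono mu malA malB mepsA mepsB mY law_eq max_util tie0.
pose idx tau l := lin_index (x tau l) beta0.
pose om tau w := ((alA w, alB w), (epsA tau w, epsB tau w)).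
pose V tau := latent_util u (Gam z) (idx tau gA) (idx tau gB).
have om_mes tau : measurable_fun setT (om tau) by do 2 apply: measurable_fun_pair.
have le_prob K : (forall p, strictly_optimal K (V s p) -> strictly_optimal K (V t p)) ->
    (P (Y s @^-1` K) <= P (Y t @^-1` K))%E.
  apply: (@choice_prob_le R _ _ _ _ P (om s) (om t) (V s) (V t)) => //.
  - by move=> c; exact: measurable_latent_util.
  - by move=> K'; apply: mY; left.
  - by move=> K'; apply: mY; right.
  - by apply: max_util; left.
  - by apply: max_util; right.
  - by apply: tie0; left.
split=> [j | l] lt_prob; apply: contrapT => hn; move: lt_prob; apply/negP;
  rewrite -leNgt; apply: le_prob => -[[aA aB] [eA eB]].
- by apply: strictly_optimal1_util_mono; apply: util_mono_of_signed => // h;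
    apply: hn; [left | right].
- case/not_orP: hn => /(util_mono_of_not_gt u_mono) le_own.
  move=> /(util_mono_of_sg u_mono) [le_pos le_neg].
  by case: l le_own le_pos le_neg => le_own le_pos le_neg;
    (apply: strictly_optimal_Dset_mono;
      [exact: le_own | move/le_pos; apply | move/le_neg; apply]).
Qed.
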